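(* Let $n\in\mathbb{N}$ and let $A,B\in M_n(\mathbb{C})$ be unitary matrices. For $\lambda\in\mathbb{T}$ define the $2n\times 2n$ matrices \[S_\lambda=\begin{pmatrix}A&\lambda B\\ B&A\end{pmatrix},\qquad T_\lambda=\begin{pmatrix}B&A\\ \bar\lambda A&B\end{pmatrix}.\] Then for every $\lambda\in\mathbb{T}$ the matrices $S_\lambda$ and $T_\lambda$ commute, and \[\inf_{\lambda\in\mathbb{T}}\max\{\|S_\lambda\|,\|T_\lambda\|\}\leq\sqrt{2+2\sin\bigl(\tfrac{\pi}{2}(1-\tfrac1n)\bigr)}.\]
   Context: $\mathbb{T}$ is the unit circle in $\mathbb{C}$ and $\|\cdot\|$ is the operator norm. *)

From HB Require Import structures.
From mathcomp Require Import all_boot all_order all_algebra.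
From mathcomp Require Import all_classical all_reals all_analysis.
From mathcomp Require Import complex.
Set Implicit Arguments. Unset Strict Implicit. Unset Printing Implicit Defensive.
Import Order.TTheory GRing.Theory Num.Theory.
Local Open Scope ring_scope.
Local Open Scope classical_set_scope.

Definition cabs2 (R : realType) (z : R[i]) : R :=
  complex.Re z ^+ 2 + complex.Im z ^+ 2.

Definition vnorm (R : realType) (m : nat) (x : 'cV[R[i]]_m) : R :=
  Num.sqrt (\sum_(i < m) cabs2 (x i 0)).

Definition opnorm (R : realType) (m k : nat) (M : 'M[R[i]]_(m, k)) : R :=
  sup [set vnorm (M *m x) | x in [set x : 'cV[R[i]]_k | vnorm x <= 1]].

Definition Smat (R : realType) (n : nat) (A B : 'M[R[i]]_n) (l : R[i])
  : 'M[R[i]]_(n + n) := block_mx A (l *: B) B A.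

Definition Tmat (R : realType) (n : nat) (A B : 'M[R[i]]_n) (l : R[i])
  : 'M[R[i]]_(n + n) := block_mx B A ((conjc l) *: A) B.

(* Put U := A^* B.  As A is unitary, for x = (y, z) both |S_l x|^2 and |T_l x|^2 equal
   |y + l U z|^2 + |U y + z|^2.  Diagonalising U = P^* diag(d) P with |d_i| = 1 reduces
   this to the scalar quantities |a + l d b|^2 + |d a + b|^2, whose cross term
   2 Re(conj(a) b (l d + conj d)) is at most K (|a|^2 + |b|^2) by Cauchy-Schwarz and AM-GM,
   where K = sqrt(2 + 2c) for any c >= Re(l d^2), because |l d + conj d|^2 = 2 + 2 Re(l d^2).
   It remains to pick l on the circle with Re(l d_i^2) <= cos(pi/n) for all i, since then
   K = 2 cos(pi/(2n)) = 2 sin(pi/2 (1 - 1/n)).  Such an l exists by pigeonhole: among the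
   n rotations of conj(d_0^2) by the odd multiples of pi/n, none lies in the open arc
   {l | Re(l d_0^2) > cos(pi/n)}, and each of the n arcs {l | Re(l d_i^2) > cos(pi/n)}
   contains at most one of them. *)

From HB Require Import structures.
From mathcomp Require Import all_boot all_order all_algebra.
From mathcomp Require Import all_classical all_reals all_analysis.
From mathcomp Require Import complex.
From mathcomp Require Import ring lra.
Set Implicit Arguments. Unset Strict Implicit. Unset Printing Implicit Defensive.
Import Order.TTheory GRing.Theory Num.Theory.
Local Open Scope ring_scope.

Local Notation Re := complex.Re.

Section ComplexModulus.
Variable R : realType.
Implicit Types a b d l p q x y : R[i].

Lemma conjCE x : Num.conj x = conjc x.
Proof. by case: x. Qed.

Lemma mulJc x : conjc x * x = ((cabs2 x)%:C)%C.
Proof. by case: x => x1 x2; rewrite /cabs2 /=; congr Complex; ring. Qed.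

Lemma cabs2M x y : cabs2 (x * y) = cabs2 x * cabs2 y.
Proof. by case: x => x1 x2; case: y => y1 y2; rewrite /cabs2 /=; ring. Qed.

Lemma cabs2J x : cabs2 (conjc x) = cabs2 x.
Proof. by case: x => x1 x2; rewrite /cabs2 /=; ring. Qed.

Lemma cabs2_ge0 x : 0 <= cabs2 x.
Proof. by rewrite /cabs2; nra. Qed.

Lemma sqr_Re_mul_le p q : Re (p * q) ^+ 2 <= cabs2 p * cabs2 q.
Proof.
case: p q => [p1 p2] [q1 q2]; rewrite /cabs2 /=.
have : 0 <= (p1 * q2 + p2 * q1) ^+ 2 by exact: sqr_ge0.
by nra.
Qed.

Lemma cabs2_phase_pairE a b d l :
  cabs2 (a + l * (d * b)) + cabs2 (d * a + b) =
  cabs2 a + cabs2 l * cabs2 d * cabs2 b + cabs2 d * cabs2 a + cabs2 b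
  + 2 * Re (conjc a * b * (l * d + conjc d)).
Proof. by case: a b d l => [a1 a2] [b1 b2] [d1 d2] [l1 l2]; rewrite /cabs2 /=; ring. Qed.

Lemma cabs2_phase_sumE d l :
  cabs2 (l * d + conjc d) = cabs2 l * cabs2 d + cabs2 d + 2 * Re (l * (d * d)).
Proof. by case: d l => [d1 d2] [l1 l2]; rewrite /cabs2 /=; ring. Qed.

Lemma two_mul_le_AMGM (X Y K r : R) : 0 <= X -> 0 <= Y -> 0 <= K ->
  r ^+ 2 <= X * Y * K ^+ 2 -> 2 * r <= K * (X + Y).
Proof.
move=> X0 Y0 K0 rXY.
have sqr_le : (2 * r) ^+ 2 <= (K * (X + Y)) ^+ 2.
  have : 0 <= K ^+ 2 * (X - Y) ^+ 2 by rewrite mulr_ge0 ?sqr_ge0.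
  by nra.
rewrite leNgt; apply/negP => lt_r.
have : 0 <= K * (X + Y) by rewrite mulr_ge0 ?addr_ge0.
by nra.
Qed.

Lemma cabs2_phase_pair_le a b d l (c K : R) :
  cabs2 d = 1 -> cabs2 l = 1 -> Re (l * (d * d)) <= c -> 0 <= K -> K ^+ 2 = 2 + 2 * c ->
  cabs2 (a + l * (d * b)) + cabs2 (d * a + b) <= (2 + K) * (cabs2 a + cabs2 b).
Proof.
move=> d1 l1 ldd_le K0 K2.
have cross := sqr_Re_mul_le (conjc a * b) (l * d + conjc d).
rewrite cabs2_phase_sumE cabs2M cabs2J d1 l1 !mul1r in cross.
have cross_le : Re (conjc a * b * (l * d + conjc d)) ^+ 2 <= cabs2 a * cabs2 b * K ^+ 2.
  apply: le_trans cross _; rewrite K2 ler_wpM2l ?mulr_ge0 ?cabs2_ge0 //; lra.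
have := two_mul_le_AMGM (cabs2_ge0 a) (cabs2_ge0 b) K0 cross_le.
by rewrite cabs2_phase_pairE d1 l1 !mul1r; lra.
Qed.

End ComplexModulus.

Section Circle.
Variable R : realType.
Implicit Types a s t c : R.

Lemma cos_le_on_arc a t : 0 <= a <= pi -> a <= t <= pi *+ 2 - a -> cos t <= cos a.
Proof.
move=> /andP[a0 api] /andP[a_le_t t_le].
have cos_le s : a <= s <= pi -> cos s <= cos a.
  move=> /andP[a_le_s spi]; rewrite leNgt ltr_cos ?in_itv /= ?a0 ?api ?spi //.
    by rewrite -leNgt.
  by rewrite (le_trans a0).
have [tpi|pit] := lerP t pi; first by rewrite cos_le ?a_le_t.
rewrite -[t](subrK (pi *+ 2)) cosD2pi -cosN opprB cos_le //; apply/andP; split; lra.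
Qed.

Definition cis t : R[i] := Complex (cos t) (sin t).

Lemma cabs2_cis t : cabs2 (cis t) = 1.
Proof. exact: cos2Dsin2. Qed.

Lemma Re_cis_mulJ s t : Re (cis s * conjc (cis t)) = cos (s - t).
Proof. by rewrite /= cosB; ring. Qed.

Lemma Re_mulJ_gt (u v : R[i]) c : cabs2 u = 1 -> cabs2 v = 1 -> 0 <= c ->
  c < Re u -> c < Re v -> 2 * c ^+ 2 - 1 < Re (u * conjc v).
Proof.
case: u v => [u1 u2] [v1 v2]; rewrite /cabs2 /= => u_1 v_1 c0 cu cv.
have : 0 <= (u2 + v2) ^+ 2 by exact: sqr_ge0.
by nra.
Qed.

End Circle.

Section PhaseChoice.
Variables (R : realType) (N : nat).
Hypothesis N_gt0 : (0 < N)%N.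

Let a : R := pi * N%:R^-1.
Let node (k : nat) : R := (2 * k%:R + 1) * a.

Let a_gt0 : 0 < a.
Proof. by rewrite mulr_gt0 ?pi_gt0 ?invr_gt0 ?ltr0n. Qed.

Let mul_a_N : a * N%:R = pi.
Proof. by rewrite mulfVK // pnatr_eq0 -lt0n. Qed.

Lemma cos_node_le (k : 'I_N) : cos (node k) <= cos a.
Proof.
have k1N : (k%:R + 1 : R) <= N%:R by rewrite natr1 ler_nat.
have k0 : (0 : R) <= k%:R by [].
have a0 := a_gt0.
have N1 : (1 : R) <= N%:R by rewrite ler1n.
apply: cos_le_on_arc; apply/andP; split; rewrite /node ?mulr2n -?mul_a_N; nra.
Qed.

Lemma cos_node_sub_le (j k : 'I_N) : (j < k)%N -> cos (node k - node j) <= cos (a *+ 2).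
Proof.
move=> jk; have j1k : (j%:R + 1 : R) <= k%:R by rewrite natr1 ler_nat.
have k1N : (k%:R + 1 : R) <= N%:R by rewrite natr1 ler_nat.
have j0 : (0 : R) <= j%:R by [].
have a0 := a_gt0.
apply: cos_le_on_arc; apply/andP; split; rewrite /node ?mulr2n -?mul_a_N; nra.
Qed.

Lemma node_arc_uniq (w : R[i]) (j k : 'I_N) : cabs2 w = 1 ->
  cos a < Re (cis (node j) * w) -> cos a < Re (cis (node k) * w) -> j = k.
Proof.
move=> w1; wlog jk : j k / (j <= k)%N.
  move=> sym; have [/sym//|/ltnW kj wj wk] := leqP j k.
  by apply/esym; apply: sym.
rewrite leq_eqVlt in jk; case/orP: jk => [/eqP/val_inj //|jk] wj wk.
have N2 : (2 : R) <= N%:R by rewrite ler_nat (leq_trans _ (leq_ltn_trans jk (ltn_ord k))).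
have cos_a_ge0 : 0 <= cos a.
  have a0 := a_gt0; have aN := mul_a_N.
  apply: cos_ge0_pihalf; apply/andP; split; first by rewrite lerNl; nra.
  by rewrite ler_pdivlMr //; nra.
have unit_w m : cabs2 (cis (node m) * w) = 1 by rewrite cabs2M cabs2_cis w1 mul1r.
have := Re_mulJ_gt (unit_w k) (unit_w j) cos_a_ge0 wk wj.
have -> : cis (node k) * w * conjc (cis (node j) * w) =
          cis (node k) * conjc (cis (node j)) * (conjc w * w).
  by rewrite rmorphM; ring.
rewrite mulJc w1 mulr1 Re_cis_mulJ.
have := cos_node_sub_le jk; rewrite cos_mulr2n mulr2n.
by move=> le_cos gt_cos; exfalso; lra.
Qed.

Lemma exists_phase_Re_le_cos (e : 'I_N -> R[i]) : (forall i, cabs2 (e i) = 1) ->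
  exists l : R[i], cabs2 l = 1 /\ forall i, Re (l * e i) <= cos a.
Proof.
move=> e1; pose i0 := Ordinal N_gt0.
pose lam (k : 'I_N) := cis (node k) * conjc (e i0).
have lam1 k : cabs2 (lam k) = 1 by rewrite cabs2M cabs2J cabs2_cis e1 mulr1.
apply: contrapT => no_phase.
have bad k : exists i, cos a < Re (lam k * e i).
  apply: contrapT => good; apply: no_phase; exists (lam k); split => // i.
  by rewrite leNgt; apply/negP => lt_i; apply: good; exists i.
have [f lt_f] := fin_all_exists bad.
have f_inj : injective f.
  move=> j k fjk; apply: (@node_arc_uniq (conjc (e i0) * e (f k))).
    by rewrite cabs2M cabs2J !e1 mulr1.
  + by rewrite mulrA -/(lam j) -fjk.
  + by rewrite mulrA -/(lam k).
have /codomP [k fk] := injF_onto f_inj i0.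
have := lt_f k; rewrite -fk -mulrA mulJc e1 mulr1 /=.
by rewrite ltNge cos_node_le.
Qed.

End PhaseChoice.

Section BoundConstant.
Variable R : realType.

Lemma sin_pihalf_1B (t : R) : sin (pi / 2 * (1 - t)) = cos (pi / 2 * t).
Proof. by rewrite -cosN -sinDpihalf; congr sin; ring. Qed.

Lemma sin_pihalf_1Binv_ge0 (n : nat) : 0 <= sin (pi / 2 * (1 - n%:R^-1)) :> R.
Proof.
have inv_ge0 : 0 <= n%:R^-1 :> R by rewrite invr_ge0.
have inv_le1 : n%:R^-1 <= 1 :> R.
  by case: n {inv_ge0} => [|m]; rewrite ?invr0 // invf_le1 ?ler1n ?ltr0n.
have pi0 := pi_gt0 R.
rewrite sin_pihalf_1B cos_ge0_pihalf //; apply/andP; split; nra.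
Qed.

Lemma sqr_2sin_pihalf_1B (t : R) :
  (2 * sin (pi / 2 * (1 - t))) ^+ 2 = 2 + 2 * cos (pi * t).
Proof.
have -> : pi * t = (pi / 2 * t) *+ 2 by rewrite mulr2n; field.
by rewrite sin_pihalf_1B cos_mulr2n mulr2n; ring.
Qed.

End BoundConstant.

Local Open Scope sesquilinear_scope.

Section SquaredNorm.
Variable R : realType.

Definition sqnorm m (x : 'cV[R[i]]_m) : R := \sum_i cabs2 (x i 0).

Lemma vnormE m (x : 'cV[R[i]]_m) : vnorm x = Num.sqrt (sqnorm x).
Proof. by []. Qed.

Lemma sqnorm0 m : sqnorm (0 : 'cV[R[i]]_m) = 0.
Proof. by rewrite /sqnorm big1 // => i _; rewrite mxE /cabs2 /= expr0n /= addr0. Qed.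

Lemma sqnorm_col_mx m1 m2 (y : 'cV[R[i]]_m1) (z : 'cV[R[i]]_m2) :
  sqnorm (col_mx y z) = sqnorm y + sqnorm z.
Proof.
by rewrite /sqnorm big_split_ord; congr (_ + _); apply: eq_bigr => i _;
  rewrite ?col_mxEu ?col_mxEd.
Qed.

Lemma sqnormZ m (l : R[i]) (x : 'cV[R[i]]_m) : cabs2 l = 1 -> sqnorm (l *: x) = sqnorm x.
Proof. by move=> l1; apply: eq_bigr => i _; rewrite mxE cabs2M l1 mul1r. Qed.

Lemma sqnorm_trC_mulmx m (x : 'cV[R[i]]_m) : ((sqnorm x)%:C)%C = (x^t* *m x) 0 0.
Proof.
rewrite /sqnorm raddf_sum mxE; apply: eq_bigr => i _.
by rewrite !mxE conjCE mulJc.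
Qed.

Lemma mulmx_trC_unitary n (M : 'M[R[i]]_n) : M \is unitarymx -> M^t* *m M = 1%:M.
Proof. by move/unitarymxP; exact: mulmx1C. Qed.

Lemma unitarymx_trC n (M : 'M[R[i]]_n) : M \is unitarymx -> M^t* \is unitarymx.
Proof. exact: etrans (trmxC_unitary M). Qed.

Lemma sqnorm_unitary n (M : 'M[R[i]]_n) (x : 'cV[R[i]]_n) :
  M \is unitarymx -> sqnorm (M *m x) = sqnorm x.
Proof.
move=> M_unitary; apply: (@complexI R).
rewrite !sqnorm_trC_mulmx trmx_mul map_mxM -!mulmxA [M^t* *m (M *m x)]mulmxA.
by rewrite mulmx_trC_unitary // mul1mx.
Qed.

End SquaredNorm.

Section UnitaryPhase.
Variable R : realType.

Lemma unitarymx_spectral n (U : 'M[R[i]]_n) : U \is unitarymx ->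
  exists P : 'M[R[i]]_n, exists d : 'rV[R[i]]_n,
    [/\ P \is unitarymx, forall i, cabs2 (d 0 i) = 1 & U = P^t* *m diag_mx d *m P].
Proof.
move=> U_unitary.
have U_normal : U \is normalmx.
  by apply/normalmxP; rewrite (unitarymxP U_unitary) mulmx_trC_unitary.
have := spectral_unitarymx U; have /orthomx_spectralP := U_normal.
rewrite invmx_unitary; last exact: spectral_unitarymx.
move: (spectralmx U) (spectral_diag U) => P d UE P_unitary.
have D_unitary : diag_mx d \is unitarymx.
  have -> : diag_mx d = P *m U *m P^t*.
    by rewrite UE !mulmxA (unitarymxP P_unitary) mul1mx mulmxtVK.
  exact: mul_unitarymx (mul_unitarymx P_unitary U_unitary) (unitarymx_trC P_unitary).
exists P, d; split; [exact: P_unitary | move=> i | exact: UE].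
move/unitarymxP: D_unitary => /matrixP /(_ i i).
rewrite mul_diag_mx !mxE !eqxx !mulr1n conjCE mulrC mulJc.
by move=> /(congr1 (@complex.Re R)).
Qed.

Lemma exists_phase_sqnorm_le n (U : 'M[R[i]]_n) : U \is unitarymx ->
  exists l : R[i], cabs2 l = 1 /\ forall y z : 'cV[R[i]]_n,
    sqnorm (y + l *: (U *m z)) + sqnorm (U *m y + z)
      <= (2 + 2 * sin (pi / 2 * (1 - n%:R^-1))) * (sqnorm y + sqnorm z).
Proof.
case: n U => [|n] U U_unitary.
  exists 1; split=> [|y z]; first by rewrite /cabs2 /= expr1n expr0n addr0.
  by rewrite /sqnorm !big_ord0 addr0 mulr0.
have [P [d [P_unitary d1 UE]]] := unitarymx_spectral U_unitary.
have dd1 i : cabs2 (d 0 i * d 0 i) = 1 by rewrite cabs2M d1 mulr1.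
have [l [l1 l_le]] := exists_phase_Re_le_cos (ltn0Sn n) dd1.
exists l; split => // y z.
have yE : y + l *: (U *m z) = P^t* *m (P *m y + l *: (diag_mx d *m (P *m z))).
  by rewrite UE mulmxDr !mulmxA mulmx_trC_unitary // mul1mx -!scalemxAr !mulmxA.
have zE : U *m y + z = P^t* *m (diag_mx d *m (P *m y) + P *m z).
  by rewrite UE mulmxDr !mulmxA mulmx_trC_unitary // mul1mx.
have PtC_unitary := unitarymx_trC P_unitary.
rewrite yE zE !sqnorm_unitary // -(sqnorm_unitary y P_unitary).
rewrite -(sqnorm_unitary z P_unitary); move: (P *m y) (P *m z) => a b.
rewrite /sqnorm -!big_split mulr_sumr; apply: ler_sum => i _.
rewrite !mul_diag_mx !mxE; apply: cabs2_phase_pair_le (l_le i) _ _ => //.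
  by rewrite mulr_ge0 ?sin_pihalf_1Binv_ge0.
exact: sqr_2sin_pihalf_1B.
Qed.

End UnitaryPhase.

Section BlockMatrices.
Variables (R : realType) (n : nat) (A B : 'M[R[i]]_n).
Hypothesis A_unitary : A \is unitarymx.

Lemma Smat_Tmat_comm (l : R[i]) : cabs2 l = 1 ->
  Smat A B l *m Tmat A B l = Tmat A B l *m Smat A B l.
Proof.
move=> l1; have lJl : l * conjc l = 1 by rewrite mulrC mulJc l1.
rewrite /Smat /Tmat !mulmx_block -!scalemxAl -!scalemxAr !scalerA lJl.
by rewrite mulrC lJl !scale1r; congr block_mx; rewrite addrC.
Qed.

Let U := A^t* *m B.

Let mulBmxE (x : 'cV[R[i]]_n) : B *m x = A *m (U *m x).
Proof. by rewrite !mulmxA (unitarymxP A_unitary) mul1mx. Qed.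

Lemma sqnorm_Smat_mul (l : R[i]) (y z : 'cV[R[i]]_n) :
  sqnorm (Smat A B l *m col_mx y z) = sqnorm (y + l *: (U *m z)) + sqnorm (U *m y + z).
Proof.
rewrite mul_block_col sqnorm_col_mx -scalemxAl !mulBmxE.
by rewrite scalemxAr -!mulmxDr !sqnorm_unitary.
Qed.

Lemma sqnorm_Tmat_mul (l : R[i]) (y z : 'cV[R[i]]_n) : cabs2 l = 1 ->
  sqnorm (Tmat A B l *m col_mx y z) = sqnorm (y + l *: (U *m z)) + sqnorm (U *m y + z).
Proof.
move=> l1; have Jl : conjc l * l = 1 by rewrite mulJc l1.
rewrite mul_block_col sqnorm_col_mx addrC -scalemxAl !mulBmxE.
rewrite -[A *m (U *m z)]scale1r -Jl -scalerA -scalerDr scalemxAr -!mulmxDr.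
by rewrite sqnormZ ?cabs2J // !sqnorm_unitary.
Qed.

End BlockMatrices.

Section OperatorNorm.
Variable R : realType.

Lemma opnorm_le_sqrt m k (M : 'M[R[i]]_(m, k)) (c : R) : 0 <= c ->
  (forall x, sqnorm (M *m x) <= c * sqnorm x) -> opnorm M <= Num.sqrt c.
Proof.
move=> c0 M_le; apply: ge_sup.
  by exists (vnorm (M *m 0)), 0; rewrite //= vnormE sqnorm0 sqrtr0.
move=> _ [x /= x_le1 <-]; rewrite vnormE ler_wsqrtr //.
have x_sq_le1 : sqnorm x <= 1.
  by rewrite -(ler_sqrt _ ler01) sqrtr1 -vnormE.
by apply: le_trans (M_le x) _; rewrite ler_piMr.
Qed.

Lemma opnorm_ge0 m k (M : 'M[R[i]]_(m, k)) : 0 <= opnorm M.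
Proof.
rewrite /opnorm; set E := (X in sup X).
have E0 : E (vnorm (M *m 0)) by exists 0; rewrite /= ?vnormE ?sqnorm0 ?sqrtr0.
have [E_ub|E_nub] := pselect (has_ubound E).
  by apply: le_trans (sup_ubound E_ub E0); rewrite vnormE sqrtr_ge0.
by rewrite sup_out // => -[_ /E_nub].
Qed.

End OperatorNorm.

Local Open Scope classical_set_scope.

Theorem theoremA1 (R : realType) (n : nat) (A B : 'M[R[i]]_n) :
  A \is unitarymx -> B \is unitarymx ->
  (forall l : R[i], cabs2 l = 1 -> Smat A B l *m Tmat A B l = Tmat A B l *m Smat A B l) /\
  inf [set Num.max (opnorm (Smat A B l)) (opnorm (Tmat A B l)) | l in [set l : R[i] | cabs2 l = 1]]
    <= Num.sqrt (2 + 2 * sin (pi / 2 * (1 - n%:R^-1))).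
Proof.
move=> A_unitary B_unitary; split=> [l l1|]; first exact: Smat_Tmat_comm.
set K := 2 + 2 * sin _.
have K_ge0 : 0 <= K by rewrite addr_ge0 ?mulr_ge0 ?sin_pihalf_1Binv_ge0.
have U_unitary := mul_unitarymx (unitarymx_trC A_unitary) B_unitary.
have [l [l1 l_le]] := exists_phase_sqnorm_le U_unitary.
have opnorm_le M : (forall y z, sqnorm (M *m col_mx y z) =
    sqnorm (y + l *: (A^t* *m B *m z)) + sqnorm (A^t* *m B *m y + z)) ->
    opnorm M <= Num.sqrt K.
  move=> ME; apply: opnorm_le_sqrt K_ge0 _ => x.
  by rewrite -[x]vsubmxK ME sqnorm_col_mx l_le.
set E := (X in inf X).
have E_lb : has_lbound E.
  by exists 0 => _ [l' _ <-]; rewrite le_max; apply/orP; left; exact: opnorm_ge0.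
have E_l : E (Num.max (opnorm (Smat A B l)) (opnorm (Tmat A B l))) by exists l.
apply: le_trans (ge_inf E_lb E_l) _.
rewrite ge_max; apply/andP; split; apply: opnorm_le => y z.
  exact: sqnorm_Smat_mul.
exact: sqnorm_Tmat_mul.
Qed.
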